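(* Consider a two-player perfect-information game of depth $D$, with notation as in the context. Let $\{\tilde U_s\}_{s\in\mathcal S}$ be learned EPFs and $\tilde\pi$ the strategy they induce. Suppose $L_\infty(\tilde U_s,\tilde U^{\mathrm{target}}_s)\le\epsilon$ for all $s\in\mathcal S$. Let $\pi^*$ be an optimal SEFCE. Then $|R_1(\tilde\pi)-R_1(\pi^* )|=\mathcal O(D\epsilon)$, i.e. it is at most $C D\epsilon$ for an absolute constant $C$ that does not depend on the game, on $\epsilon$ or on the learned EPFs.
   Context: A two-player perfect-information game is a finite rooted tree whose vertices are the states $s\in\mathcal S$. The leaves $\mathcal L$ carry payoffs $r_1(\ell),r_2(\ell)\in\mathbb R$ for the leader $\mathsf P_1$ and the follower $\mathsf P_2$. Each non-leaf state belongs to exactly one of $\mathcal S_1$ (leader) or $\mathcal S_2$ (follower). $\mathcal C(s)$ is the set of children of $s$, and $T(a;s)$ is the child reached by action $a$. The depth $D$ is the maximum number of edges on a root-to-leaf path. Define $\underline V,\overline V$ by backward induction: - for a leaf: $\underline V(\ell)=\overline V(\ell)=r_2(\ell)$; - $\underline V(s)=\min_{s'\in\mathcal C(s)}\underline V(s')$ for $s\in\mathcal S_1$; - $\underline V(s)=\max_{s'\in\mathcal C(s)}\underline V(s')$ for $s\in\mathcal S_2$; - $\overline V(s)=\max_{s'\in\mathcal C(s)}\overline V(s')$ for every non-leaf $s$. For $s\in\mathcal S_2$ and $s'\in\mathcal C(s)$, let $\tau(s')=\max_{s^!\in\mathcal C(s),s^!\ne s'}\underline V(s^!)$. Let $\beta(s')=\tau(s')$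 if the parent of $s'$ is in $\mathcal S_2$, and $\beta(s')=-\infty$ if it is in $\mathcal S_1$. For $g:\mathbb R\to\mathbb R\cup\{-\infty\}$: - $\bigwedge_i g_i$ is the upper concave envelope, i.e. the pointwise infimum of all concave $h\ge\max_i g_i$; - $[g\triangleright t](\mu)=g(\mu)$ if $\mu\ge t$ and $-\infty$ otherwise. Exact EPFs: $U_\ell(\mu)=r_1(\ell)$ if $\mu=r_2(\ell)$ and $-\infty$ otherwise; $U_s=\bigwedge_{s'\in\mathcal C(s)}(U_{s'}\triangleright\beta(s'))$ for non-leaf $s$. Learned EPFs: $\tilde U_\ell=U_\ell$ for leaves. For each non-leaf $s$, $\tilde U_s$ is a piecewise linear function, the linear interpolation of finitely many points with $x$-coordinates in $[\underline V(s),\overline V(s)]$ including both endpoints. It is real-valued on that interval and $-\infty$ outside. The target is $\tilde U^{\mathrm{target}}_s=\bigwedge_{s'\in\mathcal C(s)}(\tilde U_{s'}\triangleright\beta(s'))$ for non-leaf $s$, and $\tilde U^{\mathrm{target}}_\ell=\tilde U_\ell$ for leaves. The loss is $L_\infty(f,g)=\sup_{\mu\in\mathbb R}|f(\mu)-g(\mu)|$, with the convention $|(-\infty)-(-\infty)|=0$. Induced strategy $\tilde\pi$: start at the root with promise $\mu_{\mathrm{root}}\in\arg\max\tilde U_{\mathrm{root}}$. At a non-leaf $s$ with promise $\mu$, pick a maximizer $(s',s'',t,\mu',\mu'')$, over $s',s''\in\mathcal C(s)$, $t\in[0,1]$ with $t\mu'+(1-t)\mu''=\mu$, of $t[\tilde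 U_{s'}\triangleright\beta(s')](\mu')+(1-t)[\tilde U_{s''}\triangleright\beta(s'')](\mu'')$. Move to $s'$ with probability $t$ and promise $\mu'$, and to $s''$ with probability $1-t$ and promise $\mu''$. At follower states this is a recommendation that the follower follows. $R_1(\tilde\pi)$ is the leader's expected leaf payoff under this play. SEFCE: a (possibly recommendation-/history-dependent) joint strategy $\pi$ of leader and follower is a Stackelberg extensive-form correlated equilibrium if, for every follower state $s$ and action $a$ recommended with positive probability, the follower's expected payoff from $T(a;s)$ onward under $\pi$ is at least $\tau(T(a;s))$. The payoff threshold reflects that deviations are punished by the leader's grim strategy. An SEFCE is optimal if it maximizes the leader's expected payoff $R_1(\pi)$. *)

From HB Require Import structures.
From mathcomp Require Import all_boot all_order all_algebra.
From mathcomp Require Import all_classical all_reals ereal.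
Set Implicit Arguments. Unset Strict Implicit. Unset Printing Implicit Defensive.
Import Order.TTheory GRing.Theory Num.Theory.
Local Open Scope ring_scope.
Local Open Scope classical_set_scope.

(* States form a finite type; [kids s] lists the children of s (one per
   action, T(a;s)); [leader s] = true iff s is in S_1 (leader state),
   false iff s is in S_2 (follower state); the flag is only meaningful at
   non-leaf states.  r1, r2 are the leaf payoffs. *)
Record game (R : realType) := Game {
  St : finType;
  groot : St;
  kids : St -> seq St;
  leader : St -> bool;
  r1 : St -> R;
  r2 : St -> R }.

Section Game.
Variable R : realType.
Variable G : game R.
Local Notation S := (St G).

Definition is_leaf (s : S) : bool := kids s == [::].
Definition edge : rel S := fun x y => y \in kids x.

Definition wf_game : Prop :=
  [/\ forall s : S, uniq (kids s),
      forall x : S, groot G \notin kids x,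
      forall s : S, s != groot G -> #|[pred x : S | s \in kids x]| = 1
    & forall s : S, connect edge (groot G) s].

(* All recursions below are by backward induction, implemented with fuel
   #|S|, which exceeds the height of any state of a well-formed tree. *)
Definition fuel : nat := #|S|.

Fixpoint height_n (n : nat) (s : S) : nat :=
  match n with
  | 0 => 0
  | n'.+1 => \max_(c <- kids s) (height_n n' c).+1
  end.

(* depth D = max number of edges on a root-to-leaf path *)
Definition depth : nat := height_n fuel (groot G).

Fixpoint vlow_n (n : nat) (s : S) : R :=
  match n with
  | 0 => r2 s
  | n'.+1 =>
    match kids s with
    | [::] => r2 s
    | c :: cs =>
      if leader s
      then foldr (fun x a => Num.min (vlow_n n' x) a) (vlow_n n' c) cs
      else foldr (fun x a => Num.max (vlow_n n' x) a) (vlow_n n' c) cs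
    end
  end.

Fixpoint vup_n (n : nat) (s : S) : R :=
  match n with
  | 0 => r2 s
  | n'.+1 =>
    match kids s with
    | [::] => r2 s
    | c :: cs => foldr (fun x a => Num.max (vup_n n' x) a) (vup_n n' c) cs
    end
  end.

Definition Vlow (s : S) : R := vlow_n fuel s.
Definition Vup (s : S) : R := vup_n fuel s.

Definition tau (s c : S) : \bar R :=
  (\big[maxe/-oo]_(x <- kids s | x != c) (Vlow x)%:E)%E.

Definition beta (s c : S) : \bar R := if leader s then -oo%E else tau s c.

End Game.

Section EPF.
Variable R : realType.

Definition trunc (g : R -> \bar R) (t : \bar R) : R -> \bar R :=
  fun mu => if (t <= mu%:E)%E then g mu else -oo%E.

Definition concave_ext (h : R -> \bar R) : Prop :=
  forall (x y a b t : R), (0 <= t <= 1)%R ->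
    (a%:E <= h x)%E -> (b%:E <= h y)%E ->
    (((t * a + (1 - t) * b)%R)%:E <= h (t * x + (1 - t) * y)%R)%E.

Definition env (I : Type) (P : I -> Prop) (g : I -> R -> \bar R)
  : R -> \bar R :=
  fun mu => ereal_inf [set h mu | h in
     [set h : R -> \bar R | concave_ext h /\
        forall i x, P i -> (g i x <= h x)%E]].

Definition leafEPF (a b : R) : R -> \bar R :=
  fun mu => if mu == b then a%:E else -oo%E.

Definition is_pl (a b : R) (f : R -> \bar R) : Prop :=
  exists xs ys : seq R,
  [/\ [/\ size xs = size ys, (0 < size xs)%N, sorted <%R xs,
      head 0 xs = a & last 0 xs = b],
      forall i, (i < size xs)%N -> f (nth 0 xs i) = (nth 0 ys i)%:E,
      forall i mu, (i.+1 < size xs)%N ->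
        nth 0 xs i <= mu <= nth 0 xs i.+1 ->
        f mu = (nth 0 ys i + (mu - nth 0 xs i) / (nth 0 xs i.+1 - nth 0 xs i)
                 * (nth 0 ys i.+1 - nth 0 ys i))%:E
    & forall mu, mu < a \/ b < mu -> f mu = -oo%E].

(* L_inf(f, g) <= eps, with |(-oo) - (-oo)| = 0 and any other mismatch
   of infinite values giving +oo *)
Definition loss_le (f g : R -> \bar R) (eps : R) : Prop :=
  forall mu, (f mu = -oo%E /\ g mu = -oo%E) \/
    exists a b : R, [/\ f mu = a%:E, g mu = b%:E & `|a - b| <= eps].

End EPF.

Section Learned.
Variable R : realType.
Variable G : game R.
Local Notation S := (St G).
Variable U : S -> R -> \bar R.

Definition learned : Prop :=
  forall s : S,
    if is_leaf s then forall mu, U s mu = leafEPF (r1 s) (r2 s) mu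
    else is_pl (Vlow s) (Vup s) (U s).

Definition target (s : S) : R -> \bar R :=
  if is_leaf s then U s
  else env (fun c => c \in kids s) (fun c => trunc (U c) (beta s c)).

(* a choice (s', s'', t, mu', mu'') *)
Definition choice := (S * S * R * R * R)%type.

Definition feasible (s : S) (mu : R) (ch : choice) : Prop :=
  let '(c1, c2, t, m1, m2) := ch in
  [/\ c1 \in kids s, c2 \in kids s, (0 <= t <= 1)%R
    & t * m1 + (1 - t) * m2 = mu].

Definition split_val (s : S) (ch : choice) : \bar R :=
  let '(c1, c2, t, m1, m2) := ch in
  (t%:E * trunc (U c1) (beta s c1) m1 + ((1 - t)%R)%:E * trunc (U c2) (beta s c2) m2)%E.

Definition induced_sel (sel : S -> R -> choice) : Prop :=
  forall s mu, ~~ is_leaf s ->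
    feasible s mu (sel s mu) /\
    forall ch, feasible s mu ch -> (split_val s ch <= split_val s (sel s mu))%E.

(* expected leader payoff when play starts at s with promise mu and follows
   the induced strategy (the follower follows recommendations) *)
Fixpoint ind_pay_n (sel : S -> R -> choice) (n : nat) (s : S) (mu : R) : R :=
  match n with
  | 0 => r1 s
  | n'.+1 =>
    if kids s is [::] then r1 s
    else let '(c1, c2, t, m1, m2) := sel s mu in
         t * ind_pay_n sel n' c1 m1 + (1 - t) * ind_pay_n sel n' c2 m2
  end.

Definition R1_induced (sel : S -> R -> choice) (mu0 : R) : R :=
  ind_pay_n sel (fuel G) (groot G) mu0.

End Learned.

Section SEFCE.
Variable R : realType.
Variable G : game R.
Local Notation S := (St G).
(* In a perfect-information tree histories are states, so a (possibly
   correlated, recommendation-dependent) joint strategy is described, as far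
   as the outcome distribution and all continuation payoffs are concerned,
   by the probability pi s c of moving from s to its child c. *)
Variable pi : S -> S -> R.

Definition is_joint : Prop :=
  forall s : S, ~~ is_leaf s ->
    (forall c, c \in kids s -> 0 <= pi s c) /\ \sum_(c <- kids s) pi s c = 1.

Fixpoint exp_n (f : S -> R) (n : nat) (s : S) : R :=
  match n with
  | 0 => f s
  | n'.+1 =>
    if kids s is [::] then f s
    else \sum_(c <- kids s) pi s c * exp_n f n' c
  end.

Fixpoint reach_n (n : nat) (s : S) : R :=
  match n with
  | 0 => if s == groot G then 1 else 0
  | n'.+1 => if s == groot G then 1
             else \sum_(x : S | s \in kids x) reach_n n' x * pi x s
  end.

Definition R1 : R := exp_n (@r1 _ G) (fuel G) (groot G).
Definition follower_payoff_from (c : S) : R := exp_n (@r2 _ G) (fuel G) c.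
Definition reach (s : S) : R := reach_n (fuel G) s.

Definition SEFCE : Prop :=
  is_joint /\
  forall s c, ~~ is_leaf s -> ~~ leader s -> c \in kids s ->
    0 < reach s * pi s c -> (tau s c <= (follower_payoff_from c)%:E)%E.

End SEFCE.

Definition optimal_SEFCE (R : realType) (G : game R) (pi : St G -> St G -> R) :=
  SEFCE pi /\ forall pi' : St G -> St G -> R, SEFCE pi' -> R1 pi' <= R1 pi.

(* Everything is proved by backward induction over the tree, losing eps per level.
   (A) Started at s with a promise mu at which U_s is finite, the induced strategy
   earns the leader U_s(mu) up to height(s) * eps and keeps the promise mu to the
   follower: its split at s realises the target value, which is eps-close to U_s(mu).
   (B) For an SEFCE pi and a state s that pi reaches, U_s at the follower's
   continuation payoff is at least the leader's continuation payoff minus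
   height(s) * eps: by obedience the children's continuation payoffs lie above the
   truncation thresholds, so their pi-average lies below the concave envelope of the
   truncated child EPFs, which is the target.
   (C) The leaf distribution of the induced strategy is that of an SEFCE, because
   truncation keeps every promise made at a follower state above its threshold tau.
   With u0 the maximum of U_root, (A), (C) and optimality of pistar give
   R1(pistar) >= R1(induced) >= u0 - D eps, and (B) gives u0 >= R1(pistar) - D eps.
   Both (A) and (B) rest on the fact that the concave envelope of finitely many
   functions is attained by two-point splits (Caratheodory in dimension one). *)

From HB Require Import structures.
From mathcomp Require Import all_boot all_order all_algebra.
From mathcomp Require Import all_classical all_reals ereal.
From mathcomp Require Import ring lra zify.
Set Implicit Arguments. Unset Strict Implicit. Unset Printing Implicit Defensive.
Import Order.TTheory GRing.Theory Num.Theory.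
Local Open Scope ring_scope.

Lemma normr_comb_le (R : numDomainType) (t a b x y u : R) : 0 <= t <= 1 ->
  `|t * a + (1 - t) * b - u|
    <= t * `|a - x| + (1 - t) * `|b - y| + `|u - (t * x + (1 - t) * y)|.
Proof.
move=> /andP [t0 t1]; have t0' : 0 <= 1 - t by rewrite subr_ge0.
have -> : t * a + (1 - t) * b - u =
  t * (a - x) + (1 - t) * (b - y) + (t * x + (1 - t) * y - u) by ring.
apply: le_trans (ler_normD _ _) _; rewrite distrC lerD2r.
by apply: le_trans (ler_normD _ _) _; rewrite !normrM (ger0_norm t0) (ger0_norm t0').
Qed.

Lemma sum_indicator (T : finType) (R : pzSemiRingType) (f : T -> R) s :
  \sum_l (l == s)%:R * f l = f s.
Proof. by rewrite (bigD1 s) //= eqxx mul1r big1 ?addr0 // => l /negbTE ->; rewrite mul0r. Qed.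

Section Tree.
Variable R : realType.
Variable G : game R.
Hypothesis wf : wf_game G.
Local Notation S := (St G).
Local Notation root := (groot G).

Definition parent (s : S) : S := odflt s [pick x | s \in kids x].

Lemma root_notin_kids x : root \notin kids x.
Proof. by case: wf => _ h _ _; apply: h. Qed.

Lemma kid_neq_root x c : c \in kids x -> c != root.
Proof. by move=> cx; apply: contraTneq cx => ->; apply: root_notin_kids. Qed.

Lemma parent_kid x c : c \in kids x -> parent c = x.
Proof.
move=> cx; rewrite /parent; case: pickP => [y cy|/(_ x)]; last by rewrite cx.
case: wf => _ _ one_parent _.
have : (#|[pred x : S | c \in kids x]| <= 1)%N by rewrite one_parent ?(kid_neq_root cx).
by move/card_le1_eqP; apply; rewrite inE.
Qed.

Lemma parent_root : parent root = root.
Proof.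
by rewrite /parent; case: pickP => [y|//]; rewrite (negbTE (root_notin_kids y)).
Qed.

Lemma kid_parent s : s != root -> s \in kids (parent s).
Proof.
move=> sr; rewrite /parent; case: pickP => [y //|no_parent].
case: wf => _ _ /(_ s sr) + _.
by rewrite eq_card0 // => x; rewrite !inE no_parent.
Qed.

Lemma kidsE s x : s != root -> (s \in kids x) = (x == parent s).
Proof. by move=> sr; apply/idP/eqP => [/parent_kid ->|->]; last exact: kid_parent. Qed.

Lemma iter_parent_root s : exists n, iter n parent s == root.
Proof.
case: wf => _ _ _ /(_ s) /connectP [p + ->] {s}.
elim/last_ind: p => [|p y IH]; first by exists 0%N.
rewrite rcons_path => /andP [/IH [n /eqP hn] e].
by exists n.+1; rewrite last_rcons iterSr (parent_kid e) hn.
Qed.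

Definition level (s : S) : nat := ex_minn (iter_parent_root s).

Lemma levelP s :
  iter (level s) parent s = root /\ forall n, iter n parent s = root -> (level s <= n)%N.
Proof.
rewrite /level; case: ex_minnP => m /eqP hm hmin; split => // n hn.
by apply: hmin; apply/eqP.
Qed.

Lemma iter_parent_fix n : iter n parent root = root.
Proof. by elim: n => // n IH; rewrite iterS IH parent_root. Qed.

Lemma level_root : level root = 0%N.
Proof. by case: (levelP root) => _ /(_ 0%N erefl); case: (level root). Qed.

Lemma level_eq0 s : level s = 0%N -> s = root.
Proof. by case: (levelP s) => h _ e; rewrite e in h. Qed.

Lemma level_parent s : s != root -> level s = (level (parent s)).+1.
Proof.
move=> sr; case: (levelP s) => hs mins; case: (levelP (parent s)) => hp minp.
apply/eqP; rewrite eqn_leq; apply/andP; split; first by apply: mins; rewrite iterSr.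
move: hs mins; case: (level s) => [/= e|k e _]; first by rewrite e eqxx in sr.
by rewrite ltnS; apply: minp; rewrite -iterSr.
Qed.

Lemma level_kid x c : c \in kids x -> level c = (level x).+1.
Proof. by move=> cx; rewrite level_parent ?(parent_kid cx) // (kid_neq_root cx). Qed.

Lemma level_iter_parent s i : (i <= level s)%N -> level (iter i parent s) = (level s - i)%N.
Proof.
elim: i => [|i IH] hi; first by rewrite subn0.
have nr : iter i parent s != root.
  by apply/eqP => e; move: (IH (ltnW hi)); rewrite e level_root; lia.
by move: (level_parent nr); rewrite iterS IH ?subnS ?(ltnW hi) // => ->.
Qed.

Lemma level_lt_card s : (level s < #|S|)%N.
Proof.
pose f (i : 'I_(level s).+1) := iter i parent s.
suff /leq_card : injective f by rewrite card_ord.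
have le_s (i : 'I_(level s).+1) : (i <= level s)%N by rewrite -ltnS.
move=> i j /(congr1 level); rewrite /f !level_iter_parent ?le_s //.
by move/(congr1 (subn (level s))); rewrite !subKn ?le_s // => /val_inj.
Qed.

Definition anc (x l : S) : bool := iter (level l - level x) parent l == x.

Lemma iter_parent_ge_level l n : (level l <= n)%N -> iter n parent l = root.
Proof.
by move=> h; rewrite -(subnK h) iterD (proj1 (levelP l)) iter_parent_fix.
Qed.

Lemma ancP x l : reflect (exists n, iter n parent l = x) (anc x l).
Proof.
apply: (iffP eqP) => [<-|[n hn]]; first by eexists.
case: (leqP n (level l)) => h.
  by rewrite -hn level_iter_parent // subKn.
have -> : x = root by rewrite -hn iter_parent_ge_level // ltnW.
by rewrite level_root subn0 (proj1 (levelP l)).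
Qed.

Lemma anc_refl x : anc x x.
Proof. by apply/ancP; exists 0%N. Qed.

Lemma anc_root l : anc root l.
Proof. by apply/ancP; exists (level l); rewrite (proj1 (levelP l)). Qed.

Lemma anc_trans y x l : anc x y -> anc y l -> anc x l.
Proof.
by move=> /ancP [m <-] /ancP [n <-]; apply/ancP; exists (m + n)%N; rewrite iterD.
Qed.

Lemma anc_kid x c l : c \in kids x -> anc c l -> anc x l.
Proof. by move=> cx; apply: anc_trans; apply/ancP; exists 1%N; rewrite /= (parent_kid cx). Qed.

Lemma anc_level x l : anc x l -> (level x <= level l)%N.
Proof.
move/ancP => [n <-]; case: (leqP n (level l)) => h.
  by rewrite level_iter_parent // leq_subr.
by rewrite iter_parent_ge_level ?level_root // ltnW.
Qed.

Lemma anc_split x l : anc x l -> l != x -> exists2 c, c \in kids x & anc c l.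
Proof.
move=> axl nlx; have lt_xl : (level x < level l)%N.
  rewrite ltn_neqAle anc_level // andbT.
  by apply: contraNneq nlx => d; move: axl; rewrite /anc d subnn.
move/eqP: axl; case E: (level l - level x)%N => [|k] e; first lia.
have hk : (k <= level l)%N by lia.
have nr : iter k parent l != root.
  by apply/eqP => er; move: (level_iter_parent hk); rewrite er level_root; lia.
exists (iter k parent l); last by apply/ancP; exists k.
by rewrite -e iterS kid_parent.
Qed.

Lemma anc_kid_uniq x c c' l :
  c \in kids x -> c' \in kids x -> anc c l -> anc c' l -> c = c'.
Proof. by move=> cx c'x; rewrite /anc (level_kid cx) (level_kid c'x) => /eqP <- /eqP. Qed.

Lemma anc_leaf x l : is_leaf x -> anc x l -> l = x.
Proof.
move=> /eqP lf a; case: (eqVneq l x) => // ne.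
by case: (anc_split a ne) => c; rewrite lf.
Qed.

Lemma anc_below_kid s c c' l :
  c' \in kids s -> anc s c -> c != s -> anc c' l -> anc c l -> anc c' c.
Proof.
move=> c's asc ncs ac'l acl; case: (anc_split asc ncs) => c0 c0s ac0c.
by rewrite (anc_kid_uniq c's c0s ac'l (anc_trans ac0c acl)).
Qed.

Lemma anc_leafE x : is_leaf x -> anc x =1 pred1 x.
Proof. by move=> lf l /=; apply/idP/eqP => [/(anc_leaf lf)|->] //; apply: anc_refl. Qed.

Lemma sum_subtree_kids (phi : S -> R) x : ~~ is_leaf x -> phi x = 0 ->
  \sum_(l | anc x l) phi l = \sum_(c <- kids x) \sum_(l | anc c l) phi l.
Proof.
move=> nl phix.
have -> : \sum_(c <- kids x) \sum_(l | anc c l) phi l =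
          \sum_l \sum_(c <- kids x | anc c l) phi l.
  under eq_bigr do rewrite big_mkcond; rewrite exchange_big /=.
  by apply: eq_bigr => l _; rewrite -big_mkcond.
rewrite big_mkcond /=; apply: eq_bigr => l _; case: (eqVneq l x) => [->|nlx].
  by rewrite phix if_same big1.
case: ifP => axl; last first.
  by rewrite big1_seq // => c /andP [acl cx]; rewrite (anc_kid cx acl) in axl.
case: (anc_split axl nlx) => c cx acl.
rewrite (big_rem c cx) /= acl big1_seq ?addr0 // => c' /andP [ac'l c'r].
have c'x : c' \in kids x := mem_rem c'r.
case: wf => /(_ x) uniq_x _ _ _.
by move: c'r; rewrite -(anc_kid_uniq cx c'x acl ac'l) mem_rem_uniqF.
Qed.

Fixpoint has_walk (n : nat) (s : S) : bool :=
  if n is n'.+1 then has (has_walk n') (kids s) else true.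

Lemma has_walk_level n s : has_walk n s -> (n + level s < #|S|)%N.
Proof.
elim: n s => [|n IH] s /=; first by rewrite add0n level_lt_card.
by case/hasP => c cs /IH; rewrite (level_kid cs) addnS addSn.
Qed.

Lemma fuel_gt0 : (0 < fuel G)%N.
Proof. exact: leq_ltn_trans (level_lt_card root). Qed.

Lemma no_walk_kid_fuel x c : c \in kids x -> ~~ has_walk (fuel G).-1 c.
Proof.
move=> cx; apply/negP => /has_walk_level; rewrite (level_kid cx) /fuel.
by have := fuel_gt0; rewrite /fuel; lia.
Qed.

Lemma no_walk_fuel s : ~~ has_walk (fuel G) s.
Proof. by apply/negP => /has_walk_level; rewrite /fuel; lia. Qed.

Lemma tree_ind (P : S -> Prop) :
  (forall s, (forall c, c \in kids s -> P c) -> P s) -> forall s, P s.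
Proof.
move=> h s; suff: forall m s, ~~ has_walk m s -> P s by apply; apply: no_walk_fuel.
elim=> [|m IH] {}s //= /hasPn no_walk; apply: h => c cs.
by apply: IH; apply: no_walk.
Qed.

Section FuelFixpoint.
Variable X : Type.
Variable g : nat -> S -> X.
Variable Phi : S -> (S -> X) -> X.
Hypothesis gS : forall n s, g n.+1 s = Phi s (g n).
Hypothesis Phi_kids : forall s f f',
  (forall c, c \in kids s -> f c = f' c) -> Phi s f = Phi s f'.

Lemma fuel_stable m s : ~~ has_walk m s -> forall n, (m <= n)%N -> g n s = g m s.
Proof.
elim: m s => [|m IH] s //= /hasPn no_walk [|n] //= hn.
by rewrite !gS; apply: Phi_kids => c cs; apply: IH => //; apply: no_walk.
Qed.

Lemma fuel_fixpoint s : g (fuel G) s = Phi s (g (fuel G)).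
Proof.
have := fuel_gt0; case E: (fuel G) => [//|m] _; rewrite gS.
apply: Phi_kids => c cs; have := no_walk_kid_fuel cs; rewrite E => hc.
by rewrite (fuel_stable hc (n := m.+1)).
Qed.

End FuelFixpoint.

Lemma sum_parents (F : S -> R) s : s != root ->
  \sum_(x : S | s \in kids x) F x = F (parent s).
Proof. by move=> sr; apply: big_pred1 => x; rewrite /= kidsE. Qed.

Section Reach.
Variable pi : S -> S -> R.

Lemma reach_nS n s : reach_n pi n.+1 s =
  if s == root then 1 else reach_n pi n (parent s) * pi (parent s) s.
Proof. by rewrite /=; case: eqP => // /eqP sr; rewrite sum_parents. Qed.

Lemma reach_n_stable s n : (level s <= n)%N -> reach_n pi n s = reach_n pi (level s) s.
Proof.
elim: n s => [|n IH] s hn; first by move: hn; rewrite leqn0 => /eqP ->.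
case: (eqVneq s root) => [->|sr]; first by rewrite level_root /= eqxx.
rewrite (level_parent sr) in hn *; rewrite !reach_nS (negbTE sr).
by rewrite IH // ltnW.
Qed.

Lemma reachE s :
  reach pi s = if s == root then 1 else reach pi (parent s) * pi (parent s) s.
Proof.
have lt_fuel := level_lt_card s; rewrite /reach /fuel.
case E: #|S| lt_fuel => [//|m] lt_m; rewrite reach_nS; case: eqP => // /eqP sr.
have lvl := level_parent sr.
by rewrite (reach_n_stable (n := m.+1)) ?(reach_n_stable (n := m)) //; lia.
Qed.

End Reach.

End Tree.

Section UnderChord.
Variable R : realFieldType.
Variable Gr : R * R -> Prop.

Definition under_chord (w X A : R) : Prop :=
  exists (p q : R * R) (l k : R), [/\ Gr p, Gr q, 0 <= l, 0 <= k &
    [/\ l + k = w, l * p.1 + k * q.1 = X & A <= l * p.2 + k * q.2]].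

Lemma under_chord_le w X A A' : A' <= A -> under_chord w X A -> under_chord w X A'.
Proof.
move=> le_A [p [q [l [k [gp gq l0 k0 [ew eX eA]]]]]].
by exists p, q, l, k; split=> //; split=> //; apply: le_trans eA.
Qed.

Lemma under_chord_eq w X A w' X' A' :
  w = w' -> X = X' -> A = A' -> under_chord w X A -> under_chord w' X' A'.
Proof. by move=> -> -> ->. Qed.

Lemma under_chord_pt p w : Gr p -> 0 <= w -> under_chord w (w * p.1) (w * p.2).
Proof. by move=> gp w0; exists p, p, w, 0; split=> //; split; rewrite ?mul0r ?addr0. Qed.

Lemma under_chord_scale w X A k :
  0 <= k -> under_chord w X A -> under_chord (k * w) (k * X) (k * A).
Proof.
move=> k0 [p [q [l [m [gp gq l0 m0 [ew eX eA]]]]]].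
exists p, q, (k * l), (k * m); split; rewrite ?mulr_ge0 //; split.
- by rewrite -ew mulrDr.
- by rewrite -eX mulrDr !mulrA.
- by have := ler_wpM2l k0 eA; lra.
Qed.

Definition below_line (p q r : R * R) : bool :=
  r.2 * (q.1 - p.1) <= p.2 * (q.1 - r.1) + q.2 * (r.1 - p.1).

Lemma below_line_self_l p q : below_line p q p.
Proof. by rewrite /below_line subrr mulr0 addr0. Qed.

Lemma below_line_self_r p q : below_line p q q.
Proof. by rewrite /below_line subrr mulr0 add0r. Qed.

Lemma under_chord_line3 (p q p1 p2 p3 : R * R) (l1 l2 l3 : R) :
  Gr p -> Gr q -> p.1 < q.1 -> 0 <= l1 -> 0 <= l2 -> 0 <= l3 ->
  let W := l1 + l2 + l3 in let X := l1 * p1.1 + l2 * p2.1 + l3 * p3.1 in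
  W * p.1 <= X -> X <= W * q.1 ->
  below_line p q p1 -> below_line p q p2 -> below_line p q p3 ->
  under_chord W X (l1 * p1.2 + l2 * p2.2 + l3 * p3.2).
Proof.
move=> gp gq lt_pq l10 l20 l30 W X hpX hXq b1 b2 b3.
have d0 : 0 < q.1 - p.1 by rewrite subr_gt0.
have dn0 : q.1 - p.1 != 0 by rewrite gt_eqF.
have below : (l1 * p1.2 + l2 * p2.2 + l3 * p3.2) * (q.1 - p.1) <=
             (W * q.1 - X) * p.2 + (X - W * p.1) * q.2.
  have := ler_wpM2l l10 b1; have := ler_wpM2l l20 b2; have := ler_wpM2l l30 b3.
  by rewrite /W /X /below_line; lra.
exists p, q, ((W * q.1 - X) / (q.1 - p.1)), ((X - W * p.1) / (q.1 - p.1)).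
split=> //; try by apply: divr_ge0; lra.
split; try by field.
have -> : (W * q.1 - X) / (q.1 - p.1) * p.2 + (X - W * p.1) / (q.1 - p.1) * q.2 =
          ((W * q.1 - X) * p.2 + (X - W * p.1) * q.2) / (q.1 - p.1) by field.
by rewrite ler_pdivlMr.
Qed.

Lemma under_chord_same_abscissa (p1 p2 p3 : R * R) (l1 l2 l3 : R) :
  Gr p1 -> Gr p2 -> Gr p3 -> 0 <= l1 -> 0 <= l2 -> 0 <= l3 ->
  p1.1 = p2.1 -> p2.1 = p3.1 ->
  under_chord (l1 + l2 + l3) (l1 * p1.1 + l2 * p2.1 + l3 * p3.1)
    (l1 * p1.2 + l2 * p2.2 + l3 * p3.2).
Proof.
move=> g1 g2 g3 l10 l20 l30 e12 e23.
have [p [gp ep [h1 h2 h3]]] : exists p, [/\ Gr p, p.1 = p1.1 &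
    [/\ p1.2 <= p.2, p2.2 <= p.2 & p3.2 <= p.2]].
  case: (leP p1.2 p2.2) => a12.
  - case: (leP p2.2 p3.2) => a23.
      by exists p3; split; rewrite ?e12 ?e23 //; split; lra.
    by exists p2; split; rewrite ?e12 //; split; lra.
  - case: (leP p1.2 p3.2) => a13.
      by exists p3; split; rewrite ?e12 ?e23 //; split; lra.
    by exists p1; split => //; split; lra.
have W0 : 0 <= l1 + l2 + l3 by rewrite !addr_ge0.
have -> : l1 * p1.1 + l2 * p2.1 + l3 * p3.1 = (l1 + l2 + l3) * p.1.
  by rewrite ep -e23 -e12; ring.
apply: under_chord_le (under_chord_pt gp W0).
by have := ler_wpM2l l10 h1; have := ler_wpM2l l20 h2; have := ler_wpM2l l30 h3; lra.
Qed.

Lemma under_chord_three_sorted (p1 p2 p3 : R * R) (l1 l2 l3 : R) :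
  Gr p1 -> Gr p2 -> Gr p3 -> 0 <= l1 -> 0 <= l2 -> 0 <= l3 ->
  p1.1 <= p2.1 -> p2.1 <= p3.1 ->
  under_chord (l1 + l2 + l3) (l1 * p1.1 + l2 * p2.1 + l3 * p3.1)
    (l1 * p1.2 + l2 * p2.2 + l3 * p3.2).
Proof.
move=> g1 g2 g3 l10 l20 l30 h12 h23.
case: (eqVneq p1.1 p3.1) => [e13|n13].
  have e12 : p1.1 = p2.1 by apply/eqP; rewrite eq_le h12 e13 h23.
  by apply: under_chord_same_abscissa => //; rewrite -e12.
have l13 : p1.1 < p3.1 by rewrite lt_neqAle n13 (le_trans h12).
have hX1 : (l1 + l2 + l3) * p1.1 <= l1 * p1.1 + l2 * p2.1 + l3 * p3.1.
  by have := ler_wpM2l l20 h12; have := ler_wpM2l l30 (ltW l13); rewrite !mulrDl; lra.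
have hX3 : l1 * p1.1 + l2 * p2.1 + l3 * p3.1 <= (l1 + l2 + l3) * p3.1.
  by have := ler_wpM2l l10 (ltW l13); have := ler_wpM2l l20 h23; rewrite !mulrDl; lra.
have self := (below_line_self_l, below_line_self_r).
case: (boolP (below_line p1 p3 p2)) => [b2|].
  by apply: (under_chord_line3 (p := p1) (q := p3)); rewrite ?self.
rewrite /below_line -ltNge => above2.
case: (eqVneq p1.1 p2.1) => [e12|n12].
  apply: (under_chord_line3 (p := p2) (q := p3)); rewrite ?self //.
  - by rewrite -e12.
  - by apply: le_trans hX1; rewrite e12.
  - by move: above2; rewrite /below_line -e12; lra.
case: (lerP (l1 * p1.1 + l2 * p2.1 + l3 * p3.1) ((l1 + l2 + l3) * p2.1)) => hX2.
  apply: (under_chord_line3 (p := p1) (q := p2)); rewrite ?self //.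
    by rewrite lt_neqAle n12.
  by rewrite /below_line; lra.
apply: (under_chord_line3 (p := p2) (q := p3)); rewrite ?self ?(ltW hX2) //.
  rewrite lt_neqAle h23 andbT; apply: contraTneq hX2 => e23.
  by rewrite -leNgt; apply: le_trans hX3 _; rewrite e23.
by rewrite /below_line; lra.
Qed.

Lemma under_chord_three (p1 p2 p3 : R * R) (l1 l2 l3 : R) :
  Gr p1 -> Gr p2 -> Gr p3 -> 0 <= l1 -> 0 <= l2 -> 0 <= l3 ->
  under_chord (l1 + l2 + l3) (l1 * p1.1 + l2 * p2.1 + l3 * p3.1)
    (l1 * p1.2 + l2 * p2.2 + l3 * p3.2).
Proof.
move=> g1 g2 g3 a1 a2 a3.
case/orP: (le_total p1.1 p2.1) => h12; case/orP: (le_total p2.1 p3.1) => h23.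
- exact: under_chord_three_sorted.
- case/orP: (le_total p1.1 p3.1) => h13.
  + apply: under_chord_eq (under_chord_three_sorted g1 g3 g2 a1 a3 a2 h13 h23); ring.
  + apply: under_chord_eq (under_chord_three_sorted g3 g1 g2 a3 a1 a2 h13 h12); ring.
- case/orP: (le_total p1.1 p3.1) => h13.
  + apply: under_chord_eq (under_chord_three_sorted g2 g1 g3 a2 a1 a3 h12 h13); ring.
  + apply: under_chord_eq (under_chord_three_sorted g2 g3 g1 a2 a3 a1 h23 h13); ring.
- apply: under_chord_eq (under_chord_three_sorted g3 g2 g1 a3 a2 a1 h23 h12); ring.
Qed.

(* Caratheodory in dimension one: two points of [Gr] suffice for any finite combination. *)
Lemma under_chord_add w1 X1 A1 w2 X2 A2 :
  under_chord w1 X1 A1 -> under_chord w2 X2 A2 ->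
  under_chord (w1 + w2) (X1 + X2) (A1 + A2).
Proof.
case=> p1 [p2 [a1 [a2 [g1 g2 a10 a20 [e1 e2 e3]]]]].
case=> q1 [q2 [b1 [b2 [h1 h2 b10 b20 [f1 f2 f3]]]]].
have [r1 [r2 [c1 [c2 [k1 k2 c10 c20 [d1 d2 d3]]]]]] := under_chord_three g1 g2 h1 a10 a20 b10.
have le_A : A1 + A2 <= c1 * r1.2 + c2 * r2.2 + b2 * q2.2 by lra.
have := under_chord_le le_A (under_chord_three k1 k2 h2 c10 c20 b20).
by apply: under_chord_eq; lra.
Qed.

Lemma under_chord_sum (I : eqType) (r : seq I) (w x a : I -> R) p0 : Gr p0 ->
  (forall i, i \in r -> 0 <= w i) ->
  (forall i, i \in r -> 0 < w i -> exists2 v, Gr (x i, v) & a i <= v) ->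
  under_chord (\sum_(i <- r) w i) (\sum_(i <- r) w i * x i) (\sum_(i <- r) w i * a i).
Proof.
move=> g0; elim: r => [|i r IH] w0 pts.
  by rewrite !big_nil; apply: under_chord_eq (under_chord_pt g0 (lexx 0)); rewrite ?mul0r.
rewrite !big_cons; have ir : i \in i :: r := mem_head i r.
have sub : {subset r <= i :: r} by move=> j jr; rewrite inE jr orbT.
have {}IH := IH (fun j jr => w0 j (sub j jr)) (fun j jr => pts j (sub j jr)).
case: (eqVneq (w i) 0) => [->|wi0]; first by rewrite !mul0r !add0r.
have wi_gt0 : 0 < w i by rewrite lt_neqAle eq_sym wi0 w0.
have [v gv le_av] := pts i ir wi_gt0.
apply: under_chord_add IH; apply: under_chord_le (under_chord_pt gv (w0 i ir)).
by rewrite /= ler_wpM2l ?w0.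
Qed.

End UnderChord.

Lemma ereal_comb_cases (R : realDomainType) (t : R) (e1 e2 : \bar R) :
  0 <= t <= 1 -> e1 != +oo%E -> e2 != +oo%E ->
  (t%:E * e1 + (1 - t)%:E * e2 = -oo)%E \/
  exists v1 v2 : R, [/\ t = 0 \/ e1 = v1%:E, t = 1 \/ e2 = v2%:E &
    (t%:E * e1 + (1 - t)%:E * e2 = (t * v1 + (1 - t) * v2)%:E)%E].
Proof.
move=> /andP [t0 t1]; have [->|t_gt0] := eqVneq t 0.
  rewrite mul0e add0e subr0 mul1e; case: e2 => [v2| |] // _ _; last by left.
  by right; exists 0, v2; split; [left|right|rewrite mul0r add0r mul1r].
have [->|t_lt1] := eqVneq t 1.
  rewrite subrr mul0e adde0 mul1e; case: e1 => [v1| |] // _ _; last by left.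
  by right; exists v1, 0; split; [right|left|rewrite mul0r addr0 mul1r].
have tpos : 0 < t by rewrite lt_neqAle eq_sym t_gt0.
have tpos' : 0 < 1 - t by rewrite subr_gt0 lt_neqAle t_lt1.
case: e1 => [v1| |] // _; case: e2 => [v2| |] // _.
- by right; exists v1, v2; split; [right|right|rewrite -!EFinM -EFinD].
- by left; rewrite mulrNy gtr0_sg // mul1e addeNy.
- by left; rewrite mulrNy gtr0_sg // mul1e addNye.
- by left; rewrite mulrNy gtr0_sg // mul1e addNye.
Qed.

Section Envelope.
Variable R : realType.
Variable I : eqType.
Variable ks : seq I.
Variable g : I -> R -> \bar R.
Hypothesis g_neqy : forall i x, g i x != +oo%E.

Definition graph_of (p : R * R) : Prop := exists2 i, i \in ks & g i p.1 = p.2%:E.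

Definition mix (i1 i2 : I) (t m1 m2 : R) : \bar R :=
  (t%:E * g i1 m1 + (1 - t)%:E * g i2 m2)%E.

Lemma mix_under_chord i1 i2 t m1 m2 : i1 \in ks -> i2 \in ks -> 0 <= t <= 1 ->
  mix i1 i2 t m1 m2 = -oo%E \/
  exists a, mix i1 i2 t m1 m2 = a%:E /\ under_chord graph_of 1 (t * m1 + (1 - t) * m2) a.
Proof.
move=> k1 k2 t01; rewrite /mix.
case: (ereal_comb_cases t01 (g_neqy i1 m1) (g_neqy i2 m2)); first by left.
move=> [v1 [v2 [h1 h2 ->]]]; right; exists (t * v1 + (1 - t) * v2); split=> //.
have [t0 t1] : 0 <= t /\ 0 <= 1 - t by move/andP: t01 => [? ?]; split; lra.
have [p0 g0] : exists p0, graph_of p0.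
  case: h1 => [t_eq0|]; last by exists (m1, v1); exists i1.
  by case: h2 => [|]; [rewrite t_eq0; lra | exists (m2, v2); exists i2].
have piece i m v w : i \in ks -> 0 <= w -> w = 0 \/ g i m = v%:E ->
    under_chord graph_of w (w * m) (w * v).
  move=> ik w0 [->|gi]; last by apply: (under_chord_pt (p := (m, v))) => //; exists i.
  by apply: under_chord_eq (under_chord_pt g0 (lexx 0)); rewrite ?mul0r.
have h2' : 1 - t = 0 \/ g i2 m2 = v2%:E by case: h2 => [->|]; [left; rewrite subrr|right].
have := under_chord_add (piece _ _ _ _ k1 t0 h1) (piece _ _ _ _ k2 t1 h2').
by apply: under_chord_eq => //; lra.
Qed.

Lemma under_chord_mix X a : under_chord graph_of 1 X a -> exists i1 i2 t m1 m2,
  [/\ i1 \in ks, i2 \in ks, 0 <= t <= 1, t * m1 + (1 - t) * m2 = X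
    & (a%:E <= mix i1 i2 t m1 m2)%E].
Proof.
case=> p [q [l [k [[i1 k1 e1] [i2 k2 e2] l0 k0 [ew eX eA]]]]].
have ek : k = 1 - l by lra.
subst k; exists i1, i2, l, p.1, q.1; split=> //; first by apply/andP; split; lra.
by rewrite /mix e1 e2 -!EFinM -EFinD lee_fin.
Qed.

Lemma under_chord_le_env X a :
  under_chord graph_of 1 X a -> (a%:E <= env (fun i => i \in ks) g X)%E.
Proof.
case=> p [q [l [k [[i1 k1 e1] [i2 k2 e2] l0 k0 [ew eX eA]]]]].
apply: le_ereal_inf_tmp => _ [h [h_concave h_ge] <-].
have hp : (p.2%:E <= h p.1)%E by rewrite -e1 h_ge.
have hq : (q.2%:E <= h q.1)%E by rewrite -e2 h_ge.
have l01 : 0 <= l <= 1 by apply/andP; split; lra.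
have ek : k = 1 - l by lra.
subst k; move: (h_concave _ _ _ _ _ l01 hp hq); rewrite eX.
by apply: le_trans; rewrite lee_fin.
Qed.

Lemma mix_le_env i1 i2 t m1 m2 : i1 \in ks -> i2 \in ks -> 0 <= t <= 1 ->
  (mix i1 i2 t m1 m2 <= env (fun i => i \in ks) g (t * m1 + (1 - t) * m2))%E.
Proof.
move=> k1 k2 t01; case: (mix_under_chord m1 m2 k1 k2 t01) => [->|[a [-> ha]]].
  by rewrite leNye.
exact: under_chord_le_env.
Qed.

Variable best : R -> \bar R.
Hypothesis best_ge_mix : forall i1 i2 t m1 m2, i1 \in ks -> i2 \in ks -> 0 <= t <= 1 ->
  (mix i1 i2 t m1 m2 <= best (t * m1 + (1 - t) * m2))%E.
Hypothesis best_is_mix : forall X, exists i1 i2 t m1 m2,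
  [/\ i1 \in ks, i2 \in ks, 0 <= t <= 1, t * m1 + (1 - t) * m2 = X
    & best X = mix i1 i2 t m1 m2].

Lemma best_under_chord X a : (a%:E <= best X)%E -> under_chord graph_of 1 X a.
Proof.
have [i1 [i2 [t [m1 [m2 [k1 k2 t01 <- ->]]]]]] := best_is_mix X.
case: (mix_under_chord m1 m2 k1 k2 t01) => [->|[b [-> hb]]]; first by rewrite leeNy_eq.
by rewrite lee_fin => le_ab; apply: under_chord_le hb.
Qed.

Lemma best_concave : concave_ext best.
Proof.
move=> x y a b t /andP [t0 t1] hx hy; have t0' : 0 <= 1 - t by lra.
have := under_chord_add (under_chord_scale t0 (best_under_chord hx))
                        (under_chord_scale t0' (best_under_chord hy)).
rewrite !mulr1 subrKC => /under_chord_mix [i1 [i2 [u [m1 [m2 [k1 k2 u01 <-]]]]]].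
by move/le_trans; apply; apply: best_ge_mix.
Qed.

Lemma le_best i x : i \in ks -> (g i x <= best x)%E.
Proof.
move=> ik; have := @best_ge_mix i i 1 x x ik ik.
rewrite /mix subrr mul0e adde0 mul1e mul1r mul0r addr0; apply.
by rewrite ler01 lexx.
Qed.

Lemma env_eq_best X : env (fun i => i \in ks) g X = best X.
Proof.
apply/eqP; rewrite eq_le; apply/andP; split.
  by apply: ge_ereal_inf; exists (best X) => //; exists best => //; split;
    [exact: best_concave | move=> i x; apply: le_best].
have [i1 [i2 [t [m1 [m2 [k1 k2 t01 <- ->]]]]]] := best_is_mix X.
exact: mix_le_env.
Qed.

End Envelope.

Section Learned.
Variable R : realType.
Variable G : game R.
Local Notation S := (St G).
Local Notation root := (groot G).
Variable U : S -> R -> \bar R.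
Variable eps : R.
Variable sel : S -> R -> (S * S * R * R * R)%type.
Hypothesis wf : wf_game G.
Hypothesis U_learned : learned U.
Hypothesis U_loss : forall s, loss_le (U s) (target U s) eps.
Hypothesis sel_induced : induced_sel U sel.

Local Notation anc := (anc wf).
Local Notation child_epf s := (fun c => trunc (U c) (beta s c)).

Lemma U_neqy s x : U s x != +oo%E.
Proof. by case: (U_loss s x) => [[-> _]|[a [b [-> _ _]]]]. Qed.

Lemma child_epf_neqy s c x : child_epf s c x != +oo%E.
Proof. by rewrite /trunc; case: ifP => // _; apply: U_neqy. Qed.

Lemma U_leaf s mu : is_leaf s -> U s mu = leafEPF (r1 s) (r2 s) mu.
Proof. by have := U_learned s => + lf; rewrite lf; apply. Qed.

(* Piecewise linearity of the learned EPFs is used only through this lemma. *)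
Lemma U_somewhere_fin s : exists mu a, U s mu = a%:E.
Proof.
have := U_learned s; case: ifP => _.
  by move=> h; exists (r2 s), (r1 s); rewrite h /leafEPF eqxx.
case=> xs [ys [[_ xs_gt0 _ _ _] U_xs _ _]].
by exists (nth 0 xs 0), (nth 0 ys 0); apply: U_xs.
Qed.

Lemma eps_ge0 : 0 <= eps.
Proof.
case: (U_somewhere_fin root) => mu [a ha].
case: (U_loss root mu) => [[h _]|[x [y [_ _ hxy]]]]; first by rewrite ha in h.
exact: le_trans (normr_ge0 _) hxy.
Qed.

Lemma sel_feasible s mu : ~~ is_leaf s -> feasible s mu (sel s mu).
Proof. by move=> nl; case: (sel_induced mu nl). Qed.

Lemma split_val_sel s mu : ~~ is_leaf s -> split_val U s (sel s mu) = target U s mu.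
Proof.
move=> nl; rewrite /target (negbTE nl).
rewrite (env_eq_best (child_epf_neqy s) (best := fun X => split_val U s (sel s X))) //.
  move=> c1 c2 t m1 m2 k1 k2 t01; have [_ sel_max] := sel_induced (t * m1 + (1 - t) * m2) nl.
  by apply: (sel_max (c1, c2, t, m1, m2)); split.
move=> X; have [+ _] := sel_induced X nl.
by case: (sel s X) => [[[[c1 c2] t] m1] m2] [k1 k2 t01 eX]; exists c1, c2, t, m1, m2.
Qed.

Lemma sel_spec s mu u : ~~ is_leaf s -> U s mu = u%:E ->
  let: (c1, c2, t, m1, m2) := sel s mu in
  exists v1 v2, [/\ c1 \in kids s, c2 \in kids s, 0 <= t <= 1, t * m1 + (1 - t) * m2 = mu &
    [/\ t = 0 \/ (beta s c1 <= m1%:E)%E /\ U c1 m1 = v1%:E,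
        t = 1 \/ (beta s c2 <= m2%:E)%E /\ U c2 m2 = v2%:E
      & `|u - (t * v1 + (1 - t) * v2)| <= eps]].
Proof.
move=> nl hu; have := split_val_sel mu nl; have [+ _] := sel_induced mu nl.
case: (sel s mu) => [[[[c1 c2] t] m1] m2] [k1 k2 t01 eX] /= hsplit.
case: (U_loss s mu) => [[h _]|[a [b [ha hb hab]]]]; first by rewrite hu in h.
rewrite hb in hsplit; move: ha; rewrite hu => -[ea]; rewrite -ea in hab.
have trunc_fin c m (v : R) : trunc (U c) (beta s c) m = v%:E ->
    (beta s c <= m%:E)%E /\ U c m = v%:E by rewrite /trunc; case: ifP.
case: (ereal_comb_cases t01 (child_epf_neqy s c1 m1) (child_epf_neqy s c2 m2)).
  by rewrite hsplit.
move=> [v1 [v2 [h1 h2 e]]]; exists v1, v2; split=> //; split.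
- by case: h1 => [->|/trunc_fin]; [left|right].
- by case: h2 => [->|/trunc_fin]; [left|right].
- by move: e; rewrite hsplit => -[<-].
Qed.

Definition height (s : S) : nat := height_n (fuel G) s.

Lemma height_kid s c : c \in kids s -> ((height c).+1 <= height s)%N.
Proof.
move=> cs; have -> : height s = \max_(c <- kids s) (height c).+1.
  apply: (fuel_fixpoint wf (g := @height_n R G)
    (Phi := fun s f => \max_(c <- kids s) (f c).+1)) => //.
  by move=> s' f f' eq_f; apply: eq_big_seq => c' /eq_f ->.
exact: (@leq_bigmax_seq _ (kids s) xpredT (fun c => (height c).+1) c cs).
Qed.

Fixpoint outcome_n (n : nat) (s : S) (mu : R) (l : S) : R :=
  match n with
  | 0 => (l == s)%:R
  | n'.+1 => if kids s is [::] then (l == s)%:R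
             else let '(c1, c2, t, m1, m2) := sel s mu in
                  t * outcome_n n' c1 m1 l + (1 - t) * outcome_n n' c2 m2 l
  end.

Definition outcome (s : S) (mu : R) (l : S) : R := outcome_n (fuel G) s mu l.

Definition induced_exp (f : S -> R) (s : S) (mu : R) : R := \sum_l outcome s mu l * f l.

Lemma outcome_n_r1 n s mu : \sum_l outcome_n n s mu l * r1 l = ind_pay_n sel n s mu.
Proof.
elim: n s mu => [|n IH] s mu /=; first exact: sum_indicator.
case: (kids s) => [|_ _]; first exact: sum_indicator.
case: (sel s mu) => [[[[c1 c2] t] m1] m2].
under eq_bigr do rewrite mulrDl -!mulrA.
by rewrite big_split /= -!mulr_sumr !IH.
Qed.

Lemma outcomeE s mu l : outcome s mu l =
  if kids s is [::] then (l == s)%:R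
  else let '(c1, c2, t, m1, m2) := sel s mu in
       t * outcome c1 m1 l + (1 - t) * outcome c2 m2 l.
Proof.
pose Phi s (f : S -> R -> S -> R) mu l := if kids s is [::] then (l == s)%:R
  else let '(c1, c2, t, m1, m2) := sel s mu in t * f c1 m1 l + (1 - t) * f c2 m2 l.
rewrite /outcome (fuel_fixpoint wf (g := outcome_n) (Phi := Phi)) // => s' f f' eq_f.
apply/funext => mu'; apply/funext => l'; rewrite /Phi.
case E: (kids s') => [//|k ks]; have /sel_feasible : ~~ is_leaf s' by rewrite /is_leaf E.
by move=> /(_ mu'); case: (sel s' mu') => [[[[c1 c2] t] m1] m2] [k1 k2 _ _]; rewrite !eq_f.
Qed.

Lemma induced_expE f s mu : induced_exp f s mu =
  if kids s is [::] then f s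
  else let '(c1, c2, t, m1, m2) := sel s mu in
       t * induced_exp f c1 m1 + (1 - t) * induced_exp f c2 m2.
Proof.
rewrite /induced_exp; under eq_bigr do rewrite outcomeE.
case: (kids s) => [|_ _]; first exact: sum_indicator.
case: (sel s mu) => [[[[c1 c2] t] m1] m2].
under eq_bigr do rewrite mulrDl -!mulrA.
by rewrite big_split /= -!mulr_sumr.
Qed.

Lemma induced_exp_leaf f s mu : is_leaf s -> induced_exp f s mu = f s.
Proof. by rewrite induced_expE => /eqP ->. Qed.

Lemma induced_exp_node f s mu : ~~ is_leaf s -> induced_exp f s mu =
  let '(c1, c2, t, m1, m2) := sel s mu in
  t * induced_exp f c1 m1 + (1 - t) * induced_exp f c2 m2.
Proof. by rewrite induced_expE /is_leaf; case: (kids s). Qed.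

Lemma sel_kids s mu : ~~ is_leaf s ->
  let: (c1, c2, t, _, _) := sel s mu in [/\ c1 \in kids s, c2 \in kids s & 0 <= t <= 1].
Proof. by move=> /(@sel_feasible s mu); case: (sel s mu) => [[[[c1 c2] t] m1] m2] []. Qed.

Lemma outcome_ge0 s mu l : 0 <= outcome s mu l.
Proof.
elim/(tree_ind wf): s mu => s IH mu; rewrite outcomeE.
case E: (kids s) => [|k ks]; first by rewrite ler0n.
have nl : ~~ is_leaf s by rewrite /is_leaf E.
have := sel_kids mu nl; case: (sel s mu) => [[[[c1 c2] t] m1] m2] [k1 k2 /andP [t0 t1]].
by rewrite addr_ge0 // mulr_ge0 ?IH ?subr_ge0.
Qed.

Lemma outcome_sum1 s mu : \sum_l outcome s mu l = 1.
Proof.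
have -> : \sum_l outcome s mu l = induced_exp (fun=> 1) s mu.
  by apply: eq_bigr => l _; rewrite mulr1.
elim/(tree_ind wf): s mu => s IH mu; rewrite induced_expE.
case E: (kids s) => [//|k ks]; have nl : ~~ is_leaf s by rewrite /is_leaf E.
have := sel_kids mu nl; case: (sel s mu) => [[[[c1 c2] t] m1] m2] [k1 k2 _].
by rewrite !IH //; ring.
Qed.

Lemma outcome_supp s mu l : outcome s mu l != 0 -> is_leaf l && anc s l.
Proof.
elim/(tree_ind wf): s mu => s IH mu; rewrite outcomeE.
case E: (kids s) => [|k ks].
  by case: (eqVneq l s) => [->|]; rewrite ?eqxx // /is_leaf E anc_refl.
have nl : ~~ is_leaf s by rewrite /is_leaf E.
have := sel_kids mu nl; case: (sel s mu) => [[[[c1 c2] t] m1] m2] [k1 k2 _].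
have below c m : c \in kids s -> outcome c m l != 0 -> is_leaf l && anc s l.
  by move=> cs /(IH c cs) /andP [-> /(anc_kid cs)].
have [o1|/(below _ _ k1)//] := eqVneq (outcome c1 m1 l) 0.
have [o2|/(below _ _ k2)//] := eqVneq (outcome c2 m2 l) 0.
by rewrite o1 o2 !mulr0 addr0 eqxx.
Qed.

Lemma outcome_node s mu x : ~~ is_leaf x -> outcome s mu x = 0.
Proof. by move=> nl; apply/eqP; apply: contraNT nl => /outcome_supp /andP []. Qed.

Lemma induced_exp_subtree f f' s mu :
  (forall l, anc s l -> f l = f' l) -> induced_exp f s mu = induced_exp f' s mu.
Proof.
move=> eq_f; apply: eq_bigr => l _.
have [->|/outcome_supp /andP [_ /eq_f ->]] := eqVneq (outcome s mu l) 0; by rewrite ?mul0r.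
Qed.

Lemma induced_exp0 s mu : induced_exp (fun=> 0) s mu = 0.
Proof. by rewrite /induced_exp big1 // => l _; rewrite mulr0. Qed.

Lemma induced_exp_subr f k s mu : induced_exp (fun l => f l - k) s mu = induced_exp f s mu - k.
Proof.
rewrite /induced_exp; under eq_bigr do rewrite mulrBr.
by rewrite sumrB -mulr_suml outcome_sum1 mul1r.
Qed.

Lemma induced_exp_r2 s mu u : U s mu = u%:E -> induced_exp (@r2 _ G) s mu = mu.
Proof.
elim/(tree_ind wf): s mu u => s IH mu u hu; have [lf|nl] := boolP (is_leaf s).
  by rewrite induced_exp_leaf //; move: hu; rewrite U_leaf // /leafEPF; case: eqP.
rewrite induced_exp_node //; have := sel_spec nl hu; case: (sel s mu) => [[[[c1 c2] t] m1] m2].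
move=> [v1 [v2 [k1 k2 _ <- [h1 h2 _]]]].
congr (_ + _).
  by case: h1 => [->|[_ /IH ->]]; rewrite ?mul0r.
by case: h2 => [->|[_ /IH ->]]; rewrite ?subrr ?mul0r.
Qed.

Lemma induced_exp_r1_near s mu u : U s mu = u%:E ->
  `|induced_exp (@r1 _ G) s mu - u| <= (height s)%:R * eps.
Proof.
have eps0 := eps_ge0.
elim/(tree_ind wf): s mu u => s IH mu u hu; have [lf|nl] := boolP (is_leaf s).
  rewrite induced_exp_leaf //; move: hu; rewrite U_leaf // /leafEPF; case: eqP => // _ [<-].
  by rewrite subrr normr0 mulr_ge0.
rewrite induced_exp_node //; have := sel_spec nl hu; case: (sel s mu) => [[[[c1 c2] t] m1] m2].
move=> [v1 [v2 [k1 k2 t01 _ [h1 h2 near]]]].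
have child c m v w : c \in kids s -> 0 <= w -> w = 0 \/ (beta s c <= m%:E)%E /\ U c m = v%:E ->
    w * `|induced_exp (@r1 _ G) c m - v| <= w * (((height s)%:R - 1) * eps).
  move=> cs w0 [->|[_ /(IH c cs) near_c]]; first by rewrite !mul0r.
  apply: ler_wpM2l => //; apply: le_trans near_c _; apply: ler_wpM2r => //.
  by rewrite lerBrDr natr1 ler_nat height_kid.
have [t0 t1] : 0 <= t /\ 0 <= 1 - t by move/andP: t01 => [? ?]; split; lra.
have h2' : 1 - t = 0 \/ (beta s c2 <= m2%:E)%E /\ U c2 m2 = v2%:E.
  by case: h2 => [->|]; [left; rewrite subrr | right].
apply: le_trans (@normr_comb_le _ t _ _ v1 v2 u t01) _.
have := lerD (lerD (child _ _ _ _ k1 t0 h1) (child _ _ _ _ k2 t1 h2')) near.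
by move/le_trans; apply; lra.
Qed.

(* At c = s the promise itself must clear tau; strictly below s the truncation at
   beta guarantees it. *)
Lemma induced_exp_incentive s mu u d c tv :
  U s mu = u%:E -> c \in kids d -> ~~ leader d -> tau d c = tv%:E ->
  anc s c -> (c = s -> tv <= mu) ->
  0 <= induced_exp (fun l => (anc c l)%:R * (r2 l - tv)) s mu.
Proof.
move=> + cd follower tau_c; elim/(tree_ind wf): s mu u => s IH mu u hu asc c_s.
have [ecs|ncs] := eqVneq c s.
  rewrite (induced_exp_subtree (f' := fun l => r2 l - tv)) => [|l]; last first.
    by rewrite ecs => ->; rewrite mul1r.
  by rewrite induced_exp_subr (induced_exp_r2 hu) subr_ge0 c_s.
have [c0 c0s _] := anc_split asc ncs.
have nl : ~~ is_leaf s by apply/eqP => E; rewrite E in c0s.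
rewrite induced_exp_node //.
have := sel_spec nl hu; case: (sel s mu) => [[[[c1 c2] t] m1] m2].
move=> [v1 [v2 [k1 k2 /andP [t0 t1] _ [h1 h2 _]]]].
have child ci mi vi w : ci \in kids s -> 0 <= w ->
    w = 0 \/ (beta s ci <= mi%:E)%E /\ U ci mi = vi%:E ->
    0 <= w * induced_exp (fun l => (anc c l)%:R * (r2 l - tv)) ci mi.
  move=> cis w0 [->|[beta_mi hv]]; first by rewrite mul0r.
  apply: mulr_ge0 w0 _; have [aci|naci] := boolP (anc ci c).
    apply: (IH ci cis mi vi hv aci) => eci.
    have eds : d = s by rewrite -(parent_kid wf cd) eci (parent_kid wf cis).
    by move: beta_mi; rewrite /beta -eds (negbTE follower) -eci tau_c lee_fin.
  rewrite (induced_exp_subtree (f' := fun=> 0)) ?induced_exp0 // => l acil.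
  case: (boolP (anc c l)) => [acl|]; last by rewrite mul0r.
  by rewrite (anc_below_kid cis asc ncs acil acl) in naci.
rewrite addr_ge0 ?(child _ _ _ _ k1 t0 h1) //.
by apply: (child _ _ v2 _ k2); [lra | case: h2 => [->|]; [left; rewrite subrr|right]].
Qed.

Lemma exp_nE (pi : S -> S -> R) (f : S -> R) s : exp_n pi f (fuel G) s =
  if kids s is [::] then f s else \sum_(c <- kids s) pi s c * exp_n pi f (fuel G) c.
Proof.
apply: (fuel_fixpoint wf (g := exp_n pi f)
  (Phi := fun s h => if kids s is [::] then f s else \sum_(c <- kids s) pi s c * h c)) => //.
move=> s' h h' eq_h; case E: (kids s') => [//|k ks]; rewrite -E.
by apply: eq_big_seq => c /eq_h ->.
Qed.

Lemma exp_n_node (pi : S -> S -> R) (f : S -> R) s : ~~ is_leaf s ->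
  exp_n pi f (fuel G) s = \sum_(c <- kids s) pi s c * exp_n pi f (fuel G) c.
Proof. by rewrite exp_nE /is_leaf; case: (kids s). Qed.

Lemma joint_kid_pos (pi : S -> S -> R) s : is_joint pi -> ~~ is_leaf s ->
  exists2 c, c \in kids s & 0 < pi s c.
Proof.
move=> /(_ s) joint /joint [pi_ge0 pi_sum1].
have [/hasP pos|/hasPn none] := boolP (has (fun c => 0 < pi s c) (kids s)); first exact: pos.
have sum0 : \sum_(c <- kids s) pi s c = 0.
  by rewrite big1_seq // => c /andP [_ cs]; apply/eqP; rewrite eq_le pi_ge0 // andbT leNgt none.
by move: pi_sum1; rewrite sum0 => /eqP; rewrite eq_sym oner_eq0.
Qed.

Lemma SEFCE_le_U (pi : S -> S -> R) : SEFCE pi -> forall s, 0 < reach pi s ->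
  exists u, U s (exp_n pi (@r2 _ G) (fuel G) s) = u%:E /\
            exp_n pi (@r1 _ G) (fuel G) s - (height s)%:R * eps <= u.
Proof.
move=> [joint obedient]; have eps0 := eps_ge0.
elim/(tree_ind wf) => s IH reach_s.
set F := exp_n pi (@r2 _ G) (fuel G); set L := exp_n pi (@r1 _ G) (fuel G).
have [lf|nl] := boolP (is_leaf s).
  exists (r1 s); rewrite /F /L !exp_nE; move/eqP: (lf) => ->; split.
    by rewrite U_leaf // /leafEPF eqxx.
  by rewrite lerBlDr lerDl mulr_ge0.
have [pi_ge0 pi_sum1] := joint s nl.
pose a c := L c - ((height s)%:R - 1) * eps.
have kid_pt c : c \in kids s -> 0 < pi s c ->
    exists2 v, graph_of (kids s) (child_epf s) (F c, v) & a c <= v.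
  move=> cs pc; have reach_c : 0 < reach pi c.
    by rewrite (reachE wf) (negbTE (kid_neq_root wf cs)) (parent_kid wf cs) mulr_gt0.
  have [v [hv le_v]] := IH c cs reach_c; exists v.
    exists c => //; rewrite /trunc hv ifT // /beta; case: ifP => ld; first by rewrite leNye.
    by apply: obedient => //; [rewrite ld | rewrite mulr_gt0].
  apply: le_trans le_v; rewrite lerD2l lerN2 ler_wpM2r //.
  by rewrite lerBrDr natr1 ler_nat height_kid.
have [c0 c0s pc0] := joint_kid_pos (s := s) joint nl.
have [v0 g0 _] := kid_pt c0 c0s pc0.
have eF : \sum_(c <- kids s) pi s c * F c = F s by rewrite /F (exp_n_node _ _ nl).
have eL : \sum_(c <- kids s) pi s c * a c = L s - ((height s)%:R - 1) * eps.
  rewrite /L (exp_n_node _ _ nl) /a; under eq_bigr do rewrite mulrBr.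
  by rewrite sumrB -mulr_suml pi_sum1 mul1r.
have := under_chord_sum (r := kids s) (x := F) g0 pi_ge0 kid_pt.
have tgt : env (fun c => c \in kids s) (child_epf s) = target U s.
  by rewrite /target (negbTE nl).
rewrite pi_sum1 eF eL => /under_chord_le_env; rewrite tgt.
have [[_ ->]|[u [b [hu -> near]]]] := U_loss s (F s); first by rewrite leeNy_eq.
rewrite lee_fin => le_b; exists u; split=> //.
by move: near; rewrite distrC => /(le_trans (ler_norm _)); lra.
Qed.

Section InducedSEFCE.
Variable mu0 u0 : R.
Hypothesis U_root_mu0 : U root mu0 = u0%:E.

Definition subtree_exp (f : S -> R) (x : S) : R :=
  \sum_(l | anc x l) outcome root mu0 l * f l.

Definition subtree_mass (x : S) : R := subtree_exp (fun=> 1) x.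

(* The induced play may reach a state under several promises; this behavioural
   strategy reproduces its leaf distribution, and is uniform where it never goes. *)
Definition induced_joint (x c : S) : R :=
  if subtree_mass x == 0 then (size (kids x))%:R^-1 else subtree_mass c / subtree_mass x.

Lemma subtree_mass_ge0 x : 0 <= subtree_mass x.
Proof. by apply: sumr_ge0 => l _; rewrite mulr1 outcome_ge0. Qed.

Lemma subtree_mass_root : subtree_mass root = 1.
Proof.
have all_anc : anc root =1 xpredT by move=> l; rewrite (anc_root wf).
rewrite /subtree_mass /subtree_exp (eq_bigl _ _ all_anc).
by under eq_bigr do rewrite mulr1; apply: outcome_sum1.
Qed.

Lemma subtree_exp_node f x : ~~ is_leaf x ->
  subtree_exp f x = \sum_(c <- kids x) subtree_exp f c.
Proof. by move=> nl; apply: (sum_subtree_kids wf nl); rewrite outcome_node ?mul0r. Qed.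

Lemma subtree_exp_leaf f x : is_leaf x -> subtree_exp f x = outcome root mu0 x * f x.
Proof. by move=> lf; rewrite /subtree_exp (big_pred1 x) // => l; apply: anc_leafE. Qed.

Lemma subtree_mass_kid_le x c : c \in kids x -> subtree_mass c <= subtree_mass x.
Proof.
move=> cx; have nl : ~~ is_leaf x by apply/eqP => E; rewrite E in cx.
rewrite /subtree_mass (subtree_exp_node _ nl) (big_rem c cx) /= lerDl.
by apply: sumr_ge0 => *; apply: subtree_mass_ge0.
Qed.

Lemma subtree_exp_mass0 f x : subtree_mass x = 0 -> subtree_exp f x = 0.
Proof.
have ge0 l : anc x l -> 0 <= outcome root mu0 l * 1 by rewrite mulr1 outcome_ge0.
move=> /(psumr_eq0P ge0) mass0; rewrite /subtree_exp big1 // => l /mass0.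
by rewrite mulr1 => ->; rewrite mul0r.
Qed.

Lemma induced_joint_is_joint : is_joint induced_joint.
Proof.
move=> x nl; split=> [c cx|]; rewrite /induced_joint.
  by case: ifP => _; rewrite ?invr_ge0 ?ler0n ?divr_ge0 ?subtree_mass_ge0.
have [mass0|mass_neq0] := eqVneq (subtree_mass x) 0.
  rewrite big_const_seq count_predT iter_addr_0 -(mulr_natr _^-1) mulVf //.
  by rewrite pnatr_eq0 size_eq0.
by rewrite -mulr_suml /subtree_mass -subtree_exp_node // mulfV.
Qed.

Lemma reach_induced_joint x : reach induced_joint x = subtree_mass x.
Proof.
suff reach_level n y : level wf y = n -> reach induced_joint y = subtree_mass y.
  exact: reach_level.
elim: n y => [|n IH] y lvl.
  by rewrite (level_eq0 lvl) (reachE wf) eqxx subtree_mass_root.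
have yr : y != root by apply/eqP => er; move: lvl; rewrite er level_root.
rewrite (reachE wf) (negbTE yr) IH; last by move: lvl; rewrite (level_parent wf yr) => -[].
rewrite /induced_joint; have [mass0|mass_neq0] := eqVneq (subtree_mass (parent y)) 0.
  rewrite mass0 mul0r; apply/esym/eqP; rewrite eq_le subtree_mass_ge0 andbT -mass0.
  exact/subtree_mass_kid_le/kid_parent.
by rewrite mulrC divfK.
Qed.

Lemma exp_induced_joint f x :
  exp_n induced_joint f (fuel G) x * subtree_mass x = subtree_exp f x.
Proof.
elim/(tree_ind wf): x => x IH; have [lf|nl] := boolP (is_leaf x).
  rewrite exp_nE; move/eqP: (lf) => ->.
  by rewrite /subtree_mass !subtree_exp_leaf // mulr1 mulrC.
have [mass0|mass_neq0] := eqVneq (subtree_mass x) 0.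
  by rewrite mass0 mulr0 subtree_exp_mass0.
rewrite exp_n_node // subtree_exp_node // mulr_suml; apply: eq_big_seq => c cx.
by rewrite /induced_joint (negbTE mass_neq0) -IH //; field.
Qed.

Lemma induced_joint_SEFCE : SEFCE induced_joint.
Proof.
split; first exact: induced_joint_is_joint.
move=> d c _ follower cd; rewrite reach_induced_joint => reach_c.
have mass_d : subtree_mass d != 0 by apply: contraTneq reach_c => ->; rewrite mul0r ltxx.
have mass_c : 0 < subtree_mass c.
  by move: reach_c; rewrite /induced_joint (negbTE mass_d) mulrC divfK.
have tau_neqy : tau d c != +oo%E.
  rewrite /tau; apply: (big_ind (fun e : \bar R => e != +oo%E)) => // x y hx hy.
  by rewrite /Order.max; case: ifP.
case E: (tau d c) tau_neqy => [tv| |] // _; last by rewrite leNye.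
rewrite lee_fin -(ler_pM2r mass_c) exp_induced_joint.
have := induced_exp_incentive U_root_mu0 cd follower E (anc_root wf c).
have at_root : c = root -> tv <= mu0.
  by move=> er; move: cd; rewrite er (negbTE (root_notin_kids wf d)).
move=> /(_ at_root); rewrite /induced_exp (bigID (anc c)) /= [X in _ + X]big1; last first.
  by move=> l /negbTE ->; rewrite mul0r mulr0.
have -> : \sum_(l | anc c l) outcome root mu0 l * ((anc c l)%:R * (r2 l - tv)) =
          subtree_exp (@r2 _ G) c - tv * subtree_mass c.
  rewrite /subtree_mass /subtree_exp mulr_sumr -sumrB.
  by apply: eq_bigr => l ->; rewrite mul1r mulr1 mulrBr (mulrC tv).
by rewrite addr0 subr_ge0.
Qed.

Lemma R1_induced_joint : R1 induced_joint = R1_induced sel mu0.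
Proof.
rewrite /R1 -[LHS]mulr1 -subtree_mass_root exp_induced_joint /R1_induced -outcome_n_r1.
by apply: eq_bigl => l; rewrite (anc_root wf).
Qed.

End InducedSEFCE.

Lemma induced_near_optimal mu0 (pistar : S -> S -> R) :
  (forall mu, (U root mu <= U root mu0)%E) -> optimal_SEFCE pistar ->
  `|R1_induced sel mu0 - R1 pistar| <= 2%:R * (depth G)%:R * eps.
Proof.
move=> mu0_max [pistar_SEFCE pistar_opt]; have eps0 := eps_ge0.
have [u0 U_mu0] : exists u0, U root mu0 = u0%:E.
  have [mu1 [a U_mu1]] := U_somewhere_fin root.
  move: (mu0_max mu1) (U_neqy root mu0); rewrite U_mu1.
  by case: (U root mu0) => [u| |] //; exists u.
have induced_near := induced_exp_r1_near U_mu0.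
rewrite /induced_exp outcome_n_r1 -/(R1_induced sel mu0) in induced_near.
have reach_root : 0 < reach pistar root by rewrite (reachE wf) eqxx ltr01.
have [u [U_pistar pistar_le]] := SEFCE_le_U pistar_SEFCE reach_root.
have u_le : u <= u0.
  by move: (mu0_max (exp_n pistar (@r2 _ G) (fuel G) root)); rewrite U_pistar U_mu0.
have := pistar_opt _ (induced_joint_SEFCE U_mu0); rewrite R1_induced_joint.
move: induced_near pistar_le; rewrite /R1 /height -/(depth G) ler_norml => /andP [? ?] ? ?.
by rewrite ler_norml; apply/andP; split; lra.
Qed.

End Learned.

Theorem theorem3 :
  exists C : nat, forall (R : realType) (G : game R)
    (U : St G -> R -> \bar R) (eps : R)
    (sel : St G -> R -> (St G * St G * R * R * R)%type) (mu0 : R)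
    (pistar : St G -> St G -> R),
    wf_game G ->
    learned U ->
    (forall s, loss_le (U s) (target U s) eps) ->
    induced_sel U sel ->
    (forall mu, (U (groot G) mu <= U (groot G) mu0)%E) ->
    optimal_SEFCE pistar ->
    `|R1_induced sel mu0 - R1 pistar| <= C%:R * (depth G)%:R * eps.
Proof.
exists 2%N => R G U eps sel mu0 pistar wf U_learned U_loss sel_induced mu0_max pistar_opt.
exact: (induced_near_optimal wf U_learned U_loss sel_induced mu0_max pistar_opt).
Qed.
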